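(* Let $X$ be a chain connected uniform space. The following are equivalent: (a) $X$ is uniformly joinable; (b) $\pi_X\colon GP(X,x_0)\to X$ generates the uniform structure of $X$ for each $x_0\in X$; (c) $\pi_X\colon GP(X,x_0)\to X$ generates the uniform structure of $X$ for some $x_0\in X$.
   Context: Entourages are symmetric and contain the diagonal; $f(E)=\{(f(x),f(y)):(x,y)\in E\}$; a surjection generates the uniform structure of its range if the sets $f(E)$ form a base of it. $R(X,E)$ is the Rips complex (vertex set $X$, simplices the finite $F$ with $F\times F\subset E$, weak topology); $e(x,y)$ is the edge-path from $x$ to $y$ for $(x,y)\in E$. An $E$-chain is a sequence $x_0,\dots,x_n$ with $(x_i,x_{i+1})\in E$; $X$ is chain connected if for every entourage $E$ any two points are joined by an $E$-chain. Two paths $c,d$ in $R(X,E)$ with initial points $x_c,x_d\in X$ and terminal points $y_c,y_d\in X$ are $E$-homotopic if $(x_c,x_d),(y_c,y_d)\in E$ and $c$ is homotopic rel. end-points in $R(X,E)$ to $e(x_c,x_d)\ast d\ast e(y_d,y_c)$. A generalized path from $x$ to $y$ is a family $c=\{[c_E]\}_E$ indexed by all entourages, $[c_E]$ a homotopy class rel. end-points of paths from $x$ to $y$ in $R(X,E)$, such that $c_F$ is homotopic rel. end-points to $c_E$ in $R(X,E)$ whenever $F\subset E$. Inverse and concatenation are termwise. $GP(X)$ is the set of generalized paths with the uniform structure whose base consists of the sets $F^\ast$ of pairs $(c,d)$ with $c_F$ $F$-homotopic to $d_F$; $GP(X,x_0)\subset GP(X)$ consists of those starting at $x_0$; $\pi_X$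 sends a generalized path to its end-point. A generalized path $c$ from $x$ to $y$ is $F$-short if $(x,y)\in F$ and $c_F$ is homotopic rel. end-points in $R(X,F)$ to $e(x,y)$. $X$ is uniformly joinable if for each entourage $E$ there is an entourage $F$ such that any $(x,y)\in F$ are joined by an $E$-short generalized path. *)

From Stdlib Require Import Reals List Classical ClassicalEpsilon.
Open Scope R_scope.
Set Implicit Arguments.

(** * Uniform spaces, with symmetric entourages (convention of the paper) *)
Record Uniformity (X : Type) := {
  ent : (X -> X -> Prop) -> Prop;
  ent_refl : forall E, ent E -> forall x, E x x;
  ent_sym : forall E, ent E -> forall x y, E x y -> E y x;
  ent_full : ent (fun _ _ => True);
  ent_inter : forall E F, ent E -> ent F -> ent (fun x y => E x y /\ F x y);
  ent_super : forall E F, ent E -> (forall x y, E x y -> F x y) ->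
     (forall x, F x x) -> (forall x y, F x y -> F y x) -> ent F;
  ent_half : forall E, ent E -> exists F, ent F /\
     forall x y z, F x y -> F y z -> E x z
}.

Definition rel_image (Y X : Type) (f : Y -> X) (E : Y -> Y -> Prop) : X -> X -> Prop :=
  fun a b => exists u v, E u v /\ f u = a /\ f v = b.

Definition generates (Y X : Type) (entY : (Y -> Y -> Prop) -> Prop)
    (U : Uniformity X) (f : Y -> X) : Prop :=
  (forall x, exists y, f y = x) /\
  (forall E, entY E -> ent U (rel_image f E)) /\
  (forall D, ent U D -> exists E, entY E /\ forall a b, rel_image f E a b -> D a b).

Definition chain_connected (X : Type) (U : Uniformity X) : Prop :=
  forall E, ent U E -> forall x y : X, exists (n : nat) (f : nat -> X),
    f 0%nat = x /\ f n = y /\ forall i, (i < n)%nat -> E (f i) (f (S i)).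

(** * Geometric realization of the Rips complex R(X,E)
    A point is a function p : X -> R (barycentric coordinates). *)
Definition lsum (X : Type) (p : X -> R) (l : list X) : R :=
  fold_right (fun z acc => p z + acc) 0 l.

(** finite simplices of R(X,E): finite F with F x F ⊆ E (as duplicate-free lists) *)
Definition simplex (X : Type) (E : X -> X -> Prop) (l : list X) : Prop :=
  NoDup l /\ forall a b, In a l -> In b l -> E a b.

Definition in_simplex (X : Type) (l : list X) (p : X -> R) : Prop :=
  (forall z, 0 <= p z) /\ (forall z, p z <> 0 -> In z l) /\ lsum p l = 1.

Definition inRips (X : Type) (E : X -> X -> Prop) (p : X -> R) : Prop :=
  exists l, simplex E l /\ in_simplex l p.

(** weak topology: U is open iff its trace on each closed simplex is
    (relatively) open for the Euclidean topology of that simplex *)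
Definition openRips (X : Type) (E : X -> X -> Prop) (V : (X -> R) -> Prop) : Prop :=
  forall l, simplex E l -> forall p, in_simplex l p -> V p ->
    exists eps, eps > 0 /\ forall q, in_simplex l q ->
      (forall a, In a l -> Rabs (p a - q a) < eps) -> V q.

Definition unitI (s : R) : Prop := 0 <= s <= 1.

Definition cont_path (X : Type) (E : X -> X -> Prop) (g : R -> X -> R) : Prop :=
  (forall s, unitI s -> inRips E (g s)) /\
  forall V, openRips E V -> forall s, unitI s -> V (g s) ->
    exists d, d > 0 /\ forall s', unitI s' -> Rabs (s - s') < d -> V (g s').

Definition cont_square (X : Type) (E : X -> X -> Prop) (H : R -> R -> X -> R) : Prop :=
  (forall u s, unitI u -> unitI s -> inRips E (H u s)) /\
  forall V, openRips E V -> forall u s, unitI u -> unitI s -> V (H u s) ->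
    exists d, d > 0 /\ forall u' s', unitI u' -> unitI s' ->
      Rabs (u - u') < d -> Rabs (s - s') < d -> V (H u' s').

Definition vtx (X : Type) (x : X) : X -> R :=
  fun z => if excluded_middle_informative (z = x) then 1 else 0.

Definition is_path (X : Type) (E : X -> X -> Prop) (g : R -> X -> R) (x y : X) : Prop :=
  cont_path E g /\ g 0 = vtx x /\ g 1 = vtx y.

Definition homotopic_rel (X : Type) (E : X -> X -> Prop) (c d : R -> X -> R) : Prop :=
  exists H : R -> R -> X -> R, cont_square E H /\
    (forall s, unitI s -> H 0 s = c s /\ H 1 s = d s) /\
    (forall u, unitI u -> H u 0 = c 0 /\ H u 1 = c 1).

Definition concat (X : Type) (c d : R -> X -> R) : R -> X -> R :=
  fun s => if Rle_dec s (1/2) then c (2 * s) else d (2 * s - 1).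

Definition edge (X : Type) (x y : X) : R -> X -> R :=
  fun s z => (1 - s) * vtx x z + s * vtx y z.

Definition E_homotopic (X : Type) (E : X -> X -> Prop)
    (c : R -> X -> R) (xc yc : X) (d : R -> X -> R) (xd yd : X) : Prop :=
  E xc xd /\ E yc yd /\
  homotopic_rel E c (concat (edge xc xd) (concat d (edge yd yc))).

(** * Generalized paths, represented by a compatible family of
    representatives c_E of the homotopy classes [c_E] *)
Record GPath (X : Type) (U : Uniformity X) := {
  gp_start : X;
  gp_end : X;
  gp_rep : (X -> X -> Prop) -> R -> X -> R;
  gp_is_path : forall E, ent U E -> is_path E (gp_rep E) gp_start gp_end;
  gp_compat : forall E F, ent U E -> ent U F -> (forall a b, F a b -> E a b) ->
     homotopic_rel E (gp_rep F) (gp_rep E)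
}.

Definition Fstar (X : Type) (U : Uniformity X) (F : X -> X -> Prop)
    (c d : GPath U) : Prop :=
  E_homotopic F (gp_rep c F) (gp_start c) (gp_end c)
                (gp_rep d F) (gp_start d) (gp_end d).

Definition F_short (X : Type) (U : Uniformity X) (c : GPath U) (F : X -> X -> Prop) : Prop :=
  F (gp_start c) (gp_end c) /\
  homotopic_rel F (gp_rep c F) (edge (gp_start c) (gp_end c)).

Definition uniformly_joinable (X : Type) (U : Uniformity X) : Prop :=
  forall E, ent U E -> exists F, ent U F /\
    forall x y, F x y -> exists c : GPath U,
      gp_start c = x /\ gp_end c = y /\ F_short c E.

(** GP(X,x0) with the subspace uniformity of GP(X) *)
Definition GP0 (X : Type) (U : Uniformity X) (x0 : X) : Type :=
  { c : GPath U | gp_start c = x0 }.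

Definition ent_GP0 (X : Type) (U : Uniformity X) (x0 : X)
    (Q : GP0 U x0 -> GP0 U x0 -> Prop) : Prop :=
  (forall a, Q a a) /\ (forall a b, Q a b -> Q b a) /\
  exists F, ent U F /\
    forall a b : GP0 U x0, Fstar F (proj1_sig a) (proj1_sig b) -> Q a b.

Definition piX (X : Type) (U : Uniformity X) (x0 : X) (a : GP0 U x0) : X :=
  gp_end (proj1_sig a).

(** Homotopy rel. end-points is an
      equivalence relation compatible with concatenation and reversal, and
      concatenation obeys the groupoid laws (units, inverses, associativity)
      up to homotopy.  All these laws are instances of a single
      reparametrisation lemma: [g o p1] and [g o p2] are homotopic whenever
      p1, p2 are Lipschitz self-maps of [0,1] with the same end values
      (straight-line homotopy in the parameter).
    - Generalized paths are closed under constants, termwise concatenation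
      and termwise reversal.
    - Two translation lemmas between the basic entourages F* of GP(X) and
      shortness: appending an F-short path e to c gives a path F*-close to c;
      and if c, d have the same origin and are E*-close, then c^-1 . d is
      E-short.
    - (a) => (b): surjectivity of [piX] follows by chaining short paths along
      chains; the image of F* contains the joinability entourage by the first
      translation lemma; and the image of D* is always contained in D.
      (c) => (a): the image of E* is an entourage of X whose pairs are joined
      by E-short paths, by the second translation lemma. *)

From Pilot Require Import Defs.
From Stdlib Require Import Reals List Classical ClassicalEpsilon Lra Psatz FunctionalExtensionality.
(* Re-import so that the path concatenation of Defs shadows [List.concat]. *)
Import Pilot.Defs.
Open Scope R_scope.
Set Implicit Arguments.

Ltac rabs := unfold Rabs in *; repeat match goal with
  | |- context [Rcase_abs ?x] => destruct (Rcase_abs x)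
  | H : context [Rcase_abs ?x] |- _ => destruct (Rcase_abs x) end; lra.
Ltac no_test t := match t with context [Rle_dec _ _] => fail 1 | _ => idtac end.
Ltac split_tests := repeat (match goal with |- context [Rle_dec ?a ?b] =>
  no_test a; no_test b; destruct (Rle_dec a b) end; cbv beta iota).

Lemma unitI_0 : unitI 0.  Proof. unfold unitI; lra. Qed.
Lemma unitI_1 : unitI 1.  Proof. unfold unitI; lra. Qed.
#[local] Hint Resolve unitI_0 unitI_1 : core.

Definition maps_unitI (p : R -> R) : Prop := forall s, unitI s -> unitI (p s).

Definition lipschitz (p : R -> R) (K : R) : Prop :=
  forall s s', unitI s -> unitI s' -> Rabs (p s - p s') <= K * Rabs (s - s').

Lemma interpolation_lipschitz p1 p2 K1 K2 u s u' s' :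
  0 <= K1 -> 0 <= K2 -> maps_unitI p1 -> maps_unitI p2 -> lipschitz p1 K1 -> lipschitz p2 K2 ->
  unitI u -> unitI s -> unitI u' -> unitI s' ->
  Rabs ((1-u)*p1 s + u*p2 s - ((1-u')*p1 s' + u'*p2 s'))
    <= (K1 + K2 + 1) * (Rabs (u - u') + Rabs (s - s')).
Proof.
  intros HK1 HK2 I1 I2 L1 L2 Hu Hs Hu' Hs'.
  specialize (L1 s s' Hs Hs'); specialize (L2 s s' Hs Hs').
  pose proof (I1 s' Hs') as A1; pose proof (I2 s' Hs') as A2; unfold unitI in *.
  replace ((1-u)*p1 s + u*p2 s - ((1-u')*p1 s' + u'*p2 s'))
    with ((1-u)*(p1 s - p1 s') + u*(p2 s - p2 s') + (u'-u)*(p1 s' - p2 s')) by ring.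
  eapply Rle_trans; [apply Rabs_triang|].
  eapply Rle_trans; [apply Rplus_le_compat_r; apply Rabs_triang|].
  rewrite !Rabs_mult, (Rabs_pos_eq (1-u)), (Rabs_pos_eq u) by lra.
  assert (Hdiff : Rabs (p1 s' - p2 s') <= 1) by rabs.
  assert (Hsym : Rabs (u' - u) = Rabs (u - u')) by rabs.
  pose proof (Rabs_pos (p1 s - p1 s')). pose proof (Rabs_pos (p2 s - p2 s')).
  pose proof (Rabs_pos (u' - u)). pose proof (Rabs_pos (s - s')).
  pose proof (Rabs_pos (p1 s' - p2 s')).
  assert ((1-u)*Rabs (p1 s - p1 s') <= K1 * Rabs (s-s')) by nra.
  assert (u*Rabs (p2 s - p2 s') <= K2 * Rabs (s-s')) by nra.
  assert (Rabs (u'-u) * Rabs (p1 s' - p2 s') <= Rabs (u-u')) by nra.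
  nra.
Qed.

Definition prev {X : Type} (c : R -> X -> R) : R -> X -> R := fun s => c (1 - s).

Lemma concat_0 X (c d : R -> X -> R) : concat c d 0 = c 0.
Proof. unfold concat; destruct (Rle_dec 0 (1/2)); [|lra]. f_equal; ring. Qed.
Lemma concat_1 X (c d : R -> X -> R) : concat c d 1 = d 1.
Proof. unfold concat; destruct (Rle_dec 1 (1/2)); [lra|]. f_equal; ring. Qed.
Lemma prev_0 X (c : R -> X -> R) : prev c 0 = c 1.
Proof. unfold prev; f_equal; ring. Qed.
Lemma prev_1 X (c : R -> X -> R) : prev c 1 = c 0.
Proof. unfold prev; f_equal; ring. Qed.
Lemma edge_0 X (x y : X) : edge x y 0 = vtx x.
Proof. apply functional_extensionality; intro z; unfold edge; ring. Qed.
Lemma edge_1 X (x y : X) : edge x y 1 = vtx y.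
Proof. apply functional_extensionality; intro z; unfold edge; ring. Qed.

Lemma edge_same X (x : X) : edge x x = fun _ => vtx x.
Proof. do 2 (apply functional_extensionality; intro). unfold edge; ring. Qed.

Lemma prev_edge X (x y : X) : prev (edge x y) = edge y x.
Proof. do 2 (apply functional_extensionality; intro). unfold prev, edge; ring. Qed.

Ltac vtxs := unfold vtx in *; repeat match goal with
  | |- context [excluded_middle_informative ?P] => destruct (excluded_middle_informative P)
  | H : context [excluded_middle_informative ?P] |- _ => destruct (excluded_middle_informative P) end.

Lemma edge_in_simplex X (x y : X) s : x <> y -> unitI s -> in_simplex (x :: y :: nil) (edge x y s).
Proof.
  intros Hxy Hs; unfold unitI in Hs; split; [|split].
  - intros z; unfold edge; vtxs; lra.
  - intros z Hz. destruct (classic (z = x)) as [->|n1]; [left; auto|].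
    destruct (classic (z = y)) as [->|n2]; [right; left; auto|].
    exfalso; apply Hz; unfold edge; vtxs; try congruence; lra.
  - unfold lsum; simpl; unfold edge; vtxs; try congruence; lra.
Qed.

(** ** Paths and homotopies in a fixed Rips complex R(X,E) *)
Section RipsPaths.
Variable X : Type.
Variable E : X -> X -> Prop.

Lemma cont_square_swap H : cont_square E H -> cont_square E (fun u s => H s u).
Proof.
  intros [H1 H2]; split.
  - intros u s Hu Hs; apply H1; auto.
  - intros V O u s Hu Hs HV. destruct (H2 V O s u Hs Hu HV) as [d [Hd P]].
    exists d; split; auto.
Qed.

Lemma cont_square_flip H : cont_square E H -> cont_square E (fun u s => H u (1 - s)).
Proof.
  intros [H1 H2]; split.
  - intros u s Hu Hs; apply H1; unfold unitI in *; auto; lra.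
  - intros V O u s Hu Hs HV.
    destruct (H2 V O u (1-s) Hu ltac:(unfold unitI in *; lra) HV) as [d [Hd P]].
    exists d; split; auto. intros u' s' Hu' Hs' D1 D2. apply P; auto.
    + unfold unitI in *; lra.
    + rabs.
Qed.

Lemma cont_square_paste A B :
  cont_square E A -> cont_square E B -> (forall u, unitI u -> A u 1 = B u 0) ->
  cont_square E (fun u s => if Rle_dec s (1/2) then A u (2*s) else B u (2*s-1)).
Proof.
  intros [A1 A2] [B1 B2] AB; split.
  { intros u s Hu Hs; destruct (Rle_dec s (1/2)); [apply A1|apply B1]; auto; unfold unitI in *; lra. }
  intros V O u s Hu Hs HV.
  destruct (Rle_dec s (1/2)) as [Hle|Hgt]; [destruct (Req_dec s (1/2)) as [Hmid|Hneq]|].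
  - (* on the seam both pieces contribute a neighbourhood *)
    subst s. replace (2*(1/2)) with 1 in HV by field.
    destruct (A2 V O u 1 Hu unitI_1 HV) as [dA [HdA PA]].
    rewrite AB in HV by auto.
    destruct (B2 V O u 0 Hu unitI_0 HV) as [dB [HdB PB]].
    exists (Rmin dA dB / 2). split; [apply Rmin_case; lra|].
    pose proof (Rmin_l dA dB); pose proof (Rmin_r dA dB).
    intros u' s' Hu' Hs' D1 D2. destruct (Rle_dec s' (1/2)).
    + apply PA; auto; [unfold unitI in *; lra | rabs | rabs].
    + apply PB; auto; [unfold unitI in *; lra | rabs | rabs].
  -
    destruct (A2 V O u (2*s) Hu ltac:(unfold unitI in *; lra) HV) as [dA [HdA PA]].
    exists (Rmin (dA/2) (1/2 - s)). split; [apply Rmin_case; lra|].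
    pose proof (Rmin_l (dA/2) (1/2-s)); pose proof (Rmin_r (dA/2) (1/2-s)).
    intros u' s' Hu' Hs' D1 D2. destruct (Rle_dec s' (1/2)); [|exfalso; rabs].
    apply PA; auto; [unfold unitI in *; lra | rabs | rabs].
  -
    destruct (B2 V O u (2*s-1) Hu ltac:(unfold unitI in *; lra) HV) as [dB [HdB PB]].
    exists (Rmin (dB/2) (s - 1/2)). split; [apply Rmin_case; lra|].
    pose proof (Rmin_l (dB/2) (s-1/2)); pose proof (Rmin_r (dB/2) (s-1/2)).
    intros u' s' Hu' Hs' D1 D2. destruct (Rle_dec s' (1/2)); [exfalso; rabs|].
    apply PB; auto; [unfold unitI in *; lra | rabs | rabs].
Qed.

Lemma cont_square_reparam g (Phi : R -> R -> R) K :
  cont_path E g -> 0 < K ->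
  (forall u s, unitI u -> unitI s -> unitI (Phi u s)) ->
  (forall u s u' s', unitI u -> unitI s -> unitI u' -> unitI s' ->
     Rabs (Phi u s - Phi u' s') <= K * (Rabs (u - u') + Rabs (s - s'))) ->
  cont_square E (fun u s => g (Phi u s)).
Proof.
  intros [G1 G2] HK HP HL; split.
  - intros; apply G1; auto.
  - intros V O u s Hu Hs HV.
    destruct (G2 V O (Phi u s) (HP u s Hu Hs) HV) as [d [Hd P]].
    exists (d / (2*K)). split; [apply Rdiv_lt_0_compat; lra|].
    intros u' s' Hu' Hs' D1 D2. apply P; auto.
    specialize (HL u s u' s' Hu Hs Hu' Hs').
    assert (K * (Rabs (u-u') + Rabs (s-s')) < d).
    { replace d with (K * (2 * (d/(2*K)))) by (field; lra).
      apply Rmult_lt_compat_l; lra. }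
    lra.
Qed.

Lemma cont_path_of_square (g : R -> X -> R) :
  cont_square E (fun _ s => g s) -> cont_path E g.
Proof.
  intros [C1 C2]; split.
  - intros s Hs; apply (C1 0 s); auto.
  - intros V O s Hs HV. destruct (C2 V O 0 s unitI_0 Hs HV) as [d [Hd P]].
    exists d; split; auto. intros s' Hs' D. apply (P 0 s'); auto.
    replace (0-0) with 0 by ring; rewrite Rabs_R0; lra.
Qed.

Lemma cont_square_of_path (g : R -> X -> R) :
  cont_path E g -> cont_square E (fun _ s => g s).
Proof.
  intros C. apply (@cont_square_reparam g (fun _ s => s) 1); auto; [lra|].
  intros. pose proof (Rabs_pos (u-u')). lra.
Qed.

Lemma cont_path_reparam g phi K : cont_path E g -> 0 < K -> maps_unitI phi ->
  lipschitz phi K -> cont_path E (fun s => g (phi s)).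
Proof.
  intros C HK H1 H2. apply cont_path_of_square.
  apply (@cont_square_reparam g (fun _ s => phi s) K); auto.
  intros. eapply Rle_trans; [apply H2; auto|]. apply Rmult_le_compat_l; [lra|].
  pose proof (Rabs_pos (u-u')); lra.
Qed.

Lemma cont_path_concat c d :
  cont_path E c -> cont_path E d -> c 1 = d 0 -> cont_path E (concat c d).
Proof.
  intros. apply cont_path_of_square. unfold concat.
  apply (@cont_square_paste (fun _ s => c s) (fun _ s => d s)); try apply cont_square_of_path; auto.
Qed.

Lemma cont_path_rev c : cont_path E c -> cont_path E (prev c).
Proof.
  intros C. apply (@cont_path_reparam c (fun s => 1 - s) 1); auto; [lra| |].
  - intros s; unfold unitI; lra.
  - intros s s' _ _; rabs.
Qed.

Lemma cont_path_const x : E x x -> cont_path E (fun _ => vtx x).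
Proof.
  intros Hx; split.
  - intros s Hs. exists (x :: nil). split.
    + split; [constructor; [intros []| constructor]|].
      intros a b [->|[]] [->|[]]; auto.
    + split; [|split].
      * intros z; vtxs; lra.
      * intros z Hz; vtxs; [left; auto| lra].
      * unfold lsum; simpl. vtxs; [lra| congruence].
  - intros V O s Hs HV. exists 1; split; [lra|]. intros; auto.
Qed.

Lemma cont_path_edge x y : E x y -> E y x -> E x x -> E y y -> cont_path E (edge x y).
Proof.
  intros Hxy Hyx Hxx Hyy.
  destruct (classic (x = y)) as [<-|n]; [rewrite edge_same; apply cont_path_const; auto|].
  assert (S : simplex E (x :: y :: nil)).
  { split; [|intros a b [->|[->|[]]] [->|[->|[]]]; auto].
    constructor; [intros [->|[]]; congruence|]. constructor; [intros []|constructor]. }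
  split.
  - intros s Hs. exists (x :: y :: nil). split; auto. apply edge_in_simplex; auto.
  - intros V O s Hs HV. destruct (O _ S (edge x y s) (edge_in_simplex n Hs) HV) as [eps [He P]].
    exists eps; split; auto. intros s' Hs' D. apply P; [apply edge_in_simplex; auto|].
    intros a [<-|[<-|[]]]; unfold edge; vtxs; try congruence; rabs.
Qed.

Lemma homotopic_refl c : cont_path E c -> homotopic_rel E c c.
Proof. intros C. exists (fun _ s => c s). split; [apply cont_square_of_path; auto| split; auto]. Qed.

Lemma homotopic_ends c d : homotopic_rel E c d -> c 0 = d 0 /\ c 1 = d 1.
Proof.
  intros [H [_ [Hside Hends]]].
  destruct (Hside 0 unitI_0) as [_ A]. destruct (Hside 1 unitI_1) as [_ B].
  destruct (Hends 1 unitI_1) as [A' B'].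
  split; congruence.
Qed.

Lemma homotopic_sym c d : homotopic_rel E c d -> homotopic_rel E d c.
Proof.
  intros Hc. destruct (homotopic_ends Hc) as [e0 e1]. destruct Hc as [H [C [Hside Hends]]].
  exists (fun u s => H (1 - u) s). split.
  - apply (cont_square_swap (cont_square_flip (cont_square_swap C))).
  - split.
    + intros s Hs. replace (1-0) with 1 by ring. replace (1-1) with 0 by ring.
      destruct (Hside s Hs); split; auto.
    + intros u Hu. destruct (Hends (1-u) ltac:(unfold unitI in *; lra)). split; congruence.
Qed.

Lemma homotopic_trans c d e :
  homotopic_rel E c d -> homotopic_rel E d e -> homotopic_rel E c e.
Proof.
  intros Hc Hd. destruct (homotopic_ends Hc) as [c0 c1].
  destruct Hc as [H1 [C1 [S1 U1]]]. destruct Hd as [H2 [C2 [S2 U2]]].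
  exists (fun u s => if Rle_dec u (1/2) then H1 (2*u) s else H2 (2*u-1) s). split.
  - refine (cont_square_swap (@cont_square_paste (fun u s => H1 s u) (fun u s => H2 s u)
              (cont_square_swap C1) (cont_square_swap C2) _)).
    intros u Hu. destruct (S1 u Hu). destruct (S2 u Hu). congruence.
  - split.
    + intros s Hs. split_tests; try lra.
      replace (2*0) with 0 by ring. replace (2*1-1) with 1 by ring.
      destruct (S1 s Hs); destruct (S2 s Hs); split; auto.
    + intros u Hu. destruct (Rle_dec u (1/2)).
      * apply U1; unfold unitI in *; lra.
      * destruct (U2 (2*u-1)) as [A B]; [unfold unitI in *; lra|]. split; congruence.
Qed.

Lemma homotopic_concat c c' d d' :
  homotopic_rel E c c' -> homotopic_rel E d d' -> c 1 = d 0 ->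
  homotopic_rel E (concat c d) (concat c' d').
Proof.
  intros [H1 [C1 [S1 U1]]] [H2 [C2 [S2 U2]]] cd.
  exists (fun u s => if Rle_dec s (1/2) then H1 u (2*s) else H2 u (2*s-1)). split.
  - apply cont_square_paste; auto. intros u Hu. destruct (U1 u Hu). destruct (U2 u Hu). congruence.
  - split.
    + intros s Hs. unfold concat. destruct (Rle_dec s (1/2)).
      * apply S1; unfold unitI in *; lra.
      * apply S2; unfold unitI in *; lra.
    + intros u Hu. unfold concat. split_tests; try lra.
      replace (2*0) with 0 by ring. replace (2*1-1) with 1 by ring.
      destruct (U1 u Hu); destruct (U2 u Hu); split; auto.
Qed.

Lemma homotopic_rev c d : homotopic_rel E c d -> homotopic_rel E (prev c) (prev d).
Proof.
  intros [H [C [Hside Hends]]]. exists (fun u s => H u (1 - s)). split.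
  - apply cont_square_flip; auto.
  - split.
    + intros s Hs; apply Hside; unfold unitI in *; lra.
    + intros u Hu; unfold prev. replace (1-0) with 1 by ring. replace (1-1) with 0 by ring.
      destruct (Hends u Hu); split; auto.
Qed.

Lemma homotopic_reparam g p1 p2 K1 K2 : cont_path E g -> 0 < K1 -> 0 < K2 ->
  maps_unitI p1 -> maps_unitI p2 -> lipschitz p1 K1 -> lipschitz p2 K2 ->
  p1 0 = p2 0 -> p1 1 = p2 1 -> homotopic_rel E (fun s => g (p1 s)) (fun s => g (p2 s)).
Proof.
  intros C HK1 HK2 I1 I2 L1 L2 e0 e1.
  exists (fun u s => g ((1-u)*p1 s + u*p2 s)). split; [|split].
  - apply (@cont_square_reparam g (fun u s => (1-u)*p1 s + u*p2 s) (K1+K2+1)); auto; [lra| |].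
    + intros u s Hu Hs. specialize (I1 s Hs); specialize (I2 s Hs). unfold unitI in *; split; nra.
    + intros; apply interpolation_lipschitz; auto; lra.
  - intros s Hs. split; f_equal; ring.
  - intros u Hu. rewrite <- e0, <- e1. split; f_equal; ring.
Qed.

(** Side conditions of the groupoid laws: the reparametrisations are
    piecewise affine. *)
Ltac reparam_side := first [ lra
  | (unfold lipschitz; intros ? ? ? ?; unfold unitI in *; split_tests; rabs)
  | (intros ? ?; unfold unitI in *; split_tests; lra)
  | (split_tests; lra) ].

Lemma concat_const_l p v : cont_path E p -> p 0 = v -> homotopic_rel E (concat (fun _ => v) p) p.
Proof.
  intros C <-.
  replace (concat (fun _ => p 0) p) with (fun s => p (if Rle_dec s (1/2) then 0 else 2*s-1)).
  2:{ apply functional_extensionality; intro s; unfold concat; destruct (Rle_dec s (1/2)); auto. }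
  refine (@homotopic_reparam p _ (fun s => s) 2 1 C _ _ _ _ _ _ _ _); reparam_side.
Qed.

Lemma concat_const_r p v : cont_path E p -> p 1 = v -> homotopic_rel E (concat p (fun _ => v)) p.
Proof.
  intros C <-.
  replace (concat p (fun _ => p 1)) with (fun s => p (if Rle_dec s (1/2) then 2*s else 1)).
  2:{ apply functional_extensionality; intro s; unfold concat; destruct (Rle_dec s (1/2)); auto. }
  refine (@homotopic_reparam p _ (fun s => s) 2 1 C _ _ _ _ _ _ _ _); reparam_side.
Qed.

Lemma concat_rev_l c : cont_path E c -> homotopic_rel E (concat (prev c) c) (fun _ => c 1).
Proof.
  intros C.
  replace (concat (prev c) c) with (fun s => c (if Rle_dec s (1/2) then 1 - 2*s else 2*s-1)).
  2:{ apply functional_extensionality; intro s; unfold concat, prev; destruct (Rle_dec s (1/2)); auto. }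
  refine (@homotopic_reparam c _ (fun _ => 1) 2 1 C _ _ _ _ _ _ _ _); reparam_side.
Qed.

Lemma concat_rev_r c : cont_path E c -> homotopic_rel E (concat c (prev c)) (fun _ => c 0).
Proof.
  intros C.
  replace (concat c (prev c)) with (fun s => c (if Rle_dec s (1/2) then 2*s else 1 - (2*s-1))).
  2:{ apply functional_extensionality; intro s; unfold concat, prev; destruct (Rle_dec s (1/2)); auto. }
  refine (@homotopic_reparam c _ (fun _ => 0) 2 1 C _ _ _ _ _ _ _ _); reparam_side.
Qed.

Lemma concat_assoc a b c : cont_path E a -> cont_path E b -> cont_path E c ->
  a 1 = b 0 -> b 1 = c 0 -> homotopic_rel E (concat (concat a b) c) (concat a (concat b c)).
Proof.
  intros Ca Cb Cc ab bc.
  assert (Cabc : cont_path E (concat a (concat b c))).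
  { apply cont_path_concat; [|apply cont_path_concat|]; auto. rewrite concat_0; auto. }
  replace (concat (concat a b) c) with (fun s => concat a (concat b c)
     (if Rle_dec s (1/4) then 2*s else if Rle_dec s (1/2) then s + 1/4 else (s+1)/2)).
  2:{ apply functional_extensionality; intro s; unfold concat. split_tests;
      first [ exfalso; lra | f_equal; field | reflexivity ]. }
  refine (@homotopic_reparam _ _ (fun s => s) 2 1 Cabc _ _ _ _ _ _ _ _); reparam_side.
Qed.

End RipsPaths.

(** ** Operations on generalized paths *)
Section GeneralizedPaths.
Variable X : Type.
Variable U : Uniformity X.

Lemma cont_path_edge_ent E x y : ent U E -> E x y -> cont_path E (edge x y).
Proof.
  intros HE Hxy. apply cont_path_edge; auto; try apply (ent_refl U E HE).
  apply (ent_sym U E HE); auto.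
Qed.

Definition gp_const (x : X) : GPath U.
Proof.
  refine (@Build_GPath X U x x (fun _ _ => vtx x) _ _).
  - intros E HE. split; [apply cont_path_const, (ent_refl U E HE)| split; reflexivity].
  - intros E F HE HF HFE. apply homotopic_refl, cont_path_const, (ent_refl U E HE).
Defined.

Definition gp_concat (g h : GPath U) (Hgh : gp_end g = gp_start h) : GPath U.
Proof.
  refine (@Build_GPath X U (gp_start g) (gp_end h)
            (fun E => concat (gp_rep g E) (gp_rep h E)) _ _).
  - intros E HE. destruct (gp_is_path g E HE) as [Cg [g0 g1]].
    destruct (gp_is_path h E HE) as [Ch [h0 h1]].
    split; [apply cont_path_concat; auto; congruence|].
    rewrite concat_0, concat_1; auto.
  - intros E F HE HF HFE. destruct (gp_is_path g F HF) as [_ [_ g1]].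
    destruct (gp_is_path h F HF) as [_ [h0 _]].
    apply homotopic_concat; [apply (gp_compat g) | apply (gp_compat h) | congruence]; auto.
Defined.

Definition gp_rev (g : GPath U) : GPath U.
Proof.
  refine (@Build_GPath X U (gp_end g) (gp_start g) (fun E => prev (gp_rep g E)) _ _).
  - intros E HE. destruct (gp_is_path g E HE) as [Cg [g0 g1]].
    split; [apply cont_path_rev; auto|]. rewrite prev_0, prev_1; auto.
  - intros E F HE HF HFE. apply homotopic_rev, (gp_compat g); auto.
Defined.

Lemma gp_rev_short E (g : GPath U) : ent U E -> F_short g E -> F_short (gp_rev g) E.
Proof.
  intros HE [Hxy Hhom]. split; simpl.
  - apply (ent_sym U E HE); auto.
  - rewrite <- prev_edge. apply homotopic_rev; auto.
Qed.

Lemma Fstar_append_short F (c e : GPath U) (Hce : gp_end c = gp_start e) :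
  ent U F -> F_short e F -> Fstar F c (gp_concat c e Hce).
Proof.
  intros HF [Fxy Hsh]. unfold Fstar, E_homotopic; simpl.
  destruct (gp_is_path c F HF) as [Cc [c0 c1]]. destruct (gp_is_path e F HF) as [Ce [e0 e1]].
  set (x0 := gp_start c) in *. set (x := gp_end c) in *. set (y := gp_end e) in *.
  rewrite <- Hce in *. set (cF := gp_rep c F) in *. set (eF := gp_rep e F) in *.
  split; [apply (ent_refl U F HF)| split; [exact Fxy|]].
  assert (Cxy : cont_path F (edge x y)) by (apply cont_path_edge_ent; auto).
  assert (Cyx : cont_path F (edge y x)) by (apply cont_path_edge_ent, (ent_sym U F HF); auto).
  assert (Ccxy : cont_path F (concat cF (edge x y))).
  { apply cont_path_concat; auto. rewrite edge_0; auto. }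
  apply homotopic_sym. rewrite edge_same.
  (* e(x0,x0) . ((c . e) . e(y,x))  ~  (c . e(x,y)) . e(y,x) *)
  eapply homotopic_trans.
  { apply concat_const_l; [|rewrite !concat_0; auto].
    apply cont_path_concat; [apply cont_path_concat; auto; congruence | auto |].
    rewrite concat_1, edge_0; auto. }
  eapply homotopic_trans.
  { apply homotopic_concat; [apply homotopic_concat; [apply homotopic_refl; auto | exact Hsh | congruence]
                            | apply homotopic_refl; auto |].
    rewrite concat_1, edge_0; auto. }
  (*  ~  c . (e(x,y) . e(y,x))  ~  c . const_x  ~  c *)
  eapply homotopic_trans; [apply concat_assoc; auto; rewrite ?edge_0, ?edge_1; auto|].
  eapply homotopic_trans.
  { apply homotopic_concat; [apply homotopic_refl; auto | rewrite <- (prev_edge x y); apply concat_rev_r; auto |].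
    rewrite concat_0, edge_0; auto. }
  rewrite edge_0. apply concat_const_r; auto.
Qed.

Lemma gp_rev_concat_short E (c d : GPath U) (Hcd : gp_end (gp_rev c) = gp_start d) :
  ent U E -> gp_start c = gp_start d -> Fstar E d c -> F_short (gp_concat (gp_rev c) d Hcd) E.
Proof.
  intros HE Hs [_ [Hyx HH]]. split; simpl; [apply (ent_sym U E HE); auto|].
  destruct (gp_is_path c E HE) as [Cc [c0 c1]]. destruct (gp_is_path d E HE) as [Cd [d0 d1]].
  set (cE := gp_rep c E) in *. set (dE := gp_rep d E) in *.
  set (x := gp_end c) in *. set (y := gp_end d) in *.
  rewrite Hs, edge_same in HH.
  assert (Cxy : cont_path E (edge x y)) by (apply cont_path_edge_ent, (ent_sym U E HE); auto).
  assert (Cce : cont_path E (concat cE (edge x y))).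
  { apply cont_path_concat; auto. rewrite edge_0; auto. }
  (* c^-1 . d  ~  c^-1 . (const . (c . e(x,y)))  ~  c^-1 . (c . e(x,y)) *)
  eapply homotopic_trans.
  { apply homotopic_concat; [apply homotopic_refl, cont_path_rev; auto | exact HH |].
    rewrite prev_1; congruence. }
  eapply homotopic_trans.
  { apply homotopic_concat; [apply homotopic_refl, cont_path_rev; auto | apply concat_const_l; auto |].
    - rewrite concat_0, c0, Hs; reflexivity.
    - rewrite prev_1, concat_0, c0, Hs; reflexivity. }
  (*  ~  (c^-1 . c) . e(x,y)  ~  const . e(x,y)  ~  e(x,y) *)
  eapply homotopic_trans.
  { apply homotopic_sym, concat_assoc; auto.
    - apply cont_path_rev; auto.
    - rewrite prev_1; auto.
    - rewrite edge_0; auto. }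
  eapply homotopic_trans.
  { apply homotopic_concat; [apply concat_rev_l; auto | apply homotopic_refl; auto |].
    rewrite concat_1, edge_0; auto. }
  rewrite c1. apply concat_const_l; auto. rewrite edge_0; auto.
Qed.

End GeneralizedPaths.

(** ** The end-point map GP(X,x0) -> X *)
Section EndPointMap.
Variable X : Type.
Variable U : Uniformity X.

Definition Fstar_sym (x0 : X) (F : X -> X -> Prop) : GP0 U x0 -> GP0 U x0 -> Prop :=
  fun a b => a = b \/ Fstar F (proj1_sig a) (proj1_sig b) \/ Fstar F (proj1_sig b) (proj1_sig a).
Arguments Fstar_sym : clear implicits.

Lemma Fstar_sym_ent x0 F : ent U F -> ent_GP0 (Fstar_sym x0 F).
Proof.
  intros HF. split; [intros a; left; auto| split].
  - intros a b [H|[H|H]]; unfold Fstar_sym; auto.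
  - exists F; split; auto. intros a b H; right; left; auto.
Qed.

(** The projection of D* is contained in D: D-homotopic paths have
    D-close end points. *)
Lemma piX_image_Fstar_sym x0 D a b :
  ent U D -> rel_image (@piX X U x0) (Fstar_sym x0 D) a b -> D a b.
Proof.
  intros HD [c [d [[H|[[_ [H _]]|[_ [H _]]]] [<- <-]]]]; unfold piX.
  - subst d; apply (ent_refl U D HD).
  - exact H.
  - apply (ent_sym U D HD); exact H.
Qed.

(** In a chain connected, uniformly joinable space every point is the end
    point of a generalized path from x0: follow a chain of joinable steps. *)
Lemma gp_from_basepoint (Hcc : chain_connected U) x0 :
  uniformly_joinable U -> forall x, exists c : GPath U, gp_start c = x0 /\ gp_end c = x.
Proof.
  intros UJ x. destruct (UJ _ (ent_full U)) as [G [HG HGjoin]].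
  destruct (Hcc G HG x0 x) as [n [f [f0 [fn Hf]]]].
  assert (Hreach : forall i, (i <= n)%nat -> exists c : GPath U, gp_start c = x0 /\ gp_end c = f i).
  { induction i as [|i IH]; intros Hi.
    - exists (gp_const U x0); simpl; auto.
    - destruct IH as [c [c1 c2]]; [lia|].
      destruct (HGjoin _ _ (Hf i ltac:(lia))) as [e [e1 [e2 _]]].
      assert (Hce : gp_end c = gp_start e) by congruence.
      exists (gp_concat c e Hce); simpl; auto. }
  destruct (Hreach n (le_n n)) as [c [c1 c2]]. exists c; split; congruence.
Qed.

(** Under uniform joinability, the image of every entourage Q of GP(X,x0)
    is an entourage of X: if Q contains F* and G is the joinability
    entourage for F, then (x,y) in G is the image of (c, c.e) with e
    F-short, and (c, c.e) in F*. *)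
Lemma piX_image_ent x0 Q : uniformly_joinable U ->
  (forall x, exists a : GP0 U x0, piX a = x) -> ent_GP0 Q -> ent U (rel_image (@piX X U x0) Q).
Proof.
  intros UJ Surj [Qrefl [Qsym [F [HF HQ]]]]. destruct (UJ F HF) as [G [HG HGjoin]].
  apply (ent_super U G _ HG).
  - intros x y Gxy. destruct (Surj x) as [[c Hc] Hcx]. unfold piX in Hcx; simpl in Hcx.
    destruct (HGjoin x y Gxy) as [e [Hes [Hee Hshort]]].
    assert (Hce : gp_end c = gp_start e) by congruence.
    assert (Hd : gp_start (gp_concat c e Hce) = x0) by (simpl; auto).
    exists (exist (fun g => gp_start g = x0) c Hc), (exist (fun g => gp_start g = x0) _ Hd). unfold piX; simpl. split; [|auto].
    apply HQ, Fstar_append_short; auto.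
  - intros x. destruct (Surj x) as [a Ha]. exists a, a; auto.
  - intros x y [a [b [H [H1 H2]]]]. exists b, a; auto.
Qed.

Lemma generates_of_joinable (Hcc : chain_connected U) x0 :
  uniformly_joinable U -> generates (@ent_GP0 X U x0) U (@piX X U x0).
Proof.
  intros UJ.
  assert (Surj : forall x, exists a : GP0 U x0, piX a = x).
  { intros x. destruct (gp_from_basepoint Hcc x0 UJ x) as [c [c1 c2]].
    exists (exist _ c c1); auto. }
  split; [exact Surj| split].
  - intros Q HQ; apply piX_image_ent; auto.
  - intros D HD. exists (Fstar_sym x0 D); split; [apply Fstar_sym_ent; auto|].
    intros a b; apply piX_image_Fstar_sym; auto.
Qed.

(** (c) => (a): the image of the symmetrised E* is an entourage whose pairs
    (end c, end d) are joined by c^-1 . d or its reverse, which are E-short. *)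
Lemma joinable_of_generates x0 :
  generates (@ent_GP0 X U x0) U (@piX X U x0) -> uniformly_joinable U.
Proof.
  intros [_ [Himg _]] E HE.
  exists (rel_image (@piX X U x0) (Fstar_sym x0 E)); split; [apply Himg, Fstar_sym_ent; auto|].
  intros x y [[c Hc] [[d Hd] [Hcd [<- <-]]]]. unfold piX; simpl in *.
  destruct Hcd as [Heq | [Fcd | Fdc]]; simpl in *.
  - apply (f_equal (@proj1_sig _ _)) in Heq; simpl in Heq; subst d.
    exists (gp_const U (gp_end c)). split; [reflexivity| split; [reflexivity|]].
    split; simpl; [apply (ent_refl U E HE)|].
    rewrite edge_same. apply homotopic_refl, cont_path_const, (ent_refl U E HE).
  - assert (Hdc : gp_end (gp_rev d) = gp_start c) by (simpl; congruence).
    exists (gp_rev (gp_concat (gp_rev d) c Hdc)). split; [reflexivity| split; [reflexivity|]].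
    apply gp_rev_short, gp_rev_concat_short; auto; congruence.
  - assert (Hcd : gp_end (gp_rev c) = gp_start d) by (simpl; congruence).
    exists (gp_concat (gp_rev c) d Hcd). split; [reflexivity| split; [reflexivity|]].
    apply gp_rev_concat_short; auto; congruence.
Qed.

End EndPointMap.

Unset Implicit Arguments.

Theorem mainTheorem7 (X : Type) (U : Uniformity X) (Hne : inhabited X)
    (Hcc : chain_connected U) :
  (uniformly_joinable U <->
     forall x0 : X, generates (@ent_GP0 X U x0) U (@piX X U x0)) /\
  (uniformly_joinable U <->
     exists x0 : X, generates (@ent_GP0 X U x0) U (@piX X U x0)).
Proof.
  destruct Hne as [x1]. split; split.
  - intros UJ x0; apply generates_of_joinable; auto.
  - intros Hgen; apply (joinable_of_generates (Hgen x1)).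
  - intros UJ; exists x1; apply generates_of_joinable; auto.
  - intros [x0 Hgen]; apply (joinable_of_generates Hgen).
Qed.
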